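(* Under the assumptions in the context, the operator $K$ defined by $K(t,f)=\bigl(\tfrac12\sum_{j=1}^{n-1}k_{n-j,j}(t)f_{n-j}f_j-\sum_{j=1}^\infty k_{n,j}(t)f_nf_j\bigr)_{n=1}^\infty$, $t\in[0,T)$, $f\in\ell^1_{\widetilde w}$, is a continuous mapping from $[0,T)\times\ell^1_{\widetilde w}$ to $\ell^1_w$. Moreover, $K$ is Lipschitz in the second argument on bounded sets, uniformly in the first argument on compact intervals: for every $t'\in[0,T)$ and $r>0$ there is $L$ with $\|K(t,f)-K(t,g)\|_w\le L\|f-g\|_{\widetilde w}$ for all $f,g$ with $\|f\|_{\widetilde w},\|g\|_{\widetilde w}\le r$ and $t\in[0,t']$.
   Context: Let $0<T\le\infty$, $a_n\ge0$, $b_{n,j}\ge0$ with $b_{n,j}=0$ for $j\le n$, $k_{n,j}:[0,T)\to[0,\infty)$ with $k_{n,j}(t)=k_{j,n}(t)$. For a positive sequence $v$, $\ell^1_v=\{f=(f_n)\subset\mathbb R:\|f\|_v=\sum v_n|f_n|<\infty\}$. The weight $w$ satisfies $w_n\ge n$, $(w_n)$ monotone increasing, and $\sum_{n=1}^{j-1}w_nb_{n,j}\le\kappa w_j$ for all $j\ge2$ with some $\kappa\in(0,1]$. Also $\alpha\in[0,1)$ with either (CI) $\alpha=0$, or (CII) $\kappa<1$ and $\alpha\in(0,1)$; $\widetilde w_n=(1+a_n)^\alpha w_n$. Each $k_{n,j}$ is continuous on $[0,T)$, and for every $t'\in(0,T)$ there is $c(t')>0$ with $k_{n,j}(t)\le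 c(t')\widetilde w_n\widetilde w_j/w_{n+j}$ for all $n,j$ and $t\in[0,t']$. *)

From Stdlib Require Import Reals.
From Coquelicot Require Import Coquelicot.
Open Scope R_scope.

(* Sequences f = (f_n)_{n>=1} are represented as f : nat -> R; the value f 0
   is ignored everywhere (indices start at 1). *)

Definition in_l1 (v f : nat -> R) : Prop :=
  ex_series (fun m => v (S m) * Rabs (f (S m))).

Definition l1norm (v f : nat -> R) : R :=
  Series (fun m => v (S m) * Rabs (f (S m))).

Definition seq_sub (f g : nat -> R) : nat -> R := fun n => f n - g n.

Definition in_time (T : Rbar) (t : R) : Prop := 0 <= t /\ Rbar_lt t T.

Definition wtilde (alpha : R) (a w : nat -> R) (n : nat) : R :=
  Rpower (1 + a n) alpha * w n.

Definition Kop (k : nat -> nat -> R -> R) (t : R) (f : nat -> R) (n : nat) : R :=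
  / 2 * sum_n_m (fun j => k (n - j)%nat j t * f (n - j)%nat * f j) 1 (n - 1)
  - Series (fun m => k n (S m) t * f n * f (S m)).

(* Write K(t, f) = coag A with A(i, j) = k_{i,j}(t) f_i f_j and put P(i, j) = w_{i+j} |A(i, j)|.
   Both terms of coag A are controlled by the double series of P: the gain term at n is a sum
   of P(n - j, j) along an antidiagonal, and the antidiagonals below N + 1 all lie in the square
   [1, N + 1]^2, while the loss term only needs w to be increasing.  Hence
   ||coag A||_w <= 3/2 sum_{i,j} P(i, j).  The growth bound w_{i+j} k_{i,j} <= c wt_i wt_j
   dominates P by products of l^1_wt sequences, which gives well-definedness and the local
   Lipschitz estimate.  Continuity in t for fixed f is dominated convergence for the double
   series (each k_{i,j} is continuous, and only a finite square matters once the tails are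
   small); joint continuity combines it with the Lipschitz estimate. *)

From Stdlib Require Import Reals Lra Lia.
From Coquelicot Require Import Coquelicot.
Open Scope R_scope.

Lemma sum_n_nonneg (a : nat -> R) N : (forall n, 0 <= a n) -> 0 <= sum_n a N.
Proof.
  intro Ha; induction N as [|N IH]; [rewrite sum_O; apply Ha|].
  rewrite sum_Sn; unfold plus; simpl; specialize (Ha (S N)); lra.
Qed.

Lemma sum_n_le_compat (a b : nat -> R) N :
  (forall n, a n <= b n) -> sum_n a N <= sum_n b N.
Proof. intro H; apply sum_n_m_le, H. Qed.

Lemma sum_n_le_mono (a : nat -> R) N M :
  (forall n, 0 <= a n) -> (N <= M)%nat -> sum_n a N <= sum_n a M.
Proof.
  intros Ha HNM; induction HNM as [|M _ IH]; [lra|].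
  rewrite sum_Sn; unfold plus; simpl; specialize (Ha (S M)); lra.
Qed.

Lemma term_le_sum_n (a : nat -> R) N : (forall n, 0 <= a n) -> a N <= sum_n a N.
Proof.
  intro Ha; destruct N as [|N]; [rewrite sum_O; lra|].
  rewrite sum_Sn; unfold plus; simpl; specialize (sum_n_nonneg a N Ha); lra.
Qed.

Lemma sum_n_unfold_first (a : nat -> R) N :
  sum_n a (S N) = a 0%nat + sum_n (fun m => a (S m)) N.
Proof. unfold sum_n; rewrite sum_Sn_m, sum_n_m_S by lia; reflexivity. Qed.

Lemma sum_n_trailing_zeros (a : nat -> R) K N :
  (K <= N)%nat -> (forall n, (K < n)%nat -> a n = 0) -> sum_n a N = sum_n a K.
Proof.
  intros HKN Ha; induction HKN as [|N HKN IH]; [reflexivity|].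
  rewrite sum_Sn, IH, (Ha (S N)) by lia; unfold plus; simpl; ring.
Qed.

Lemma sum_n_le_Series (a : nat -> R) N :
  (forall n, 0 <= a n) -> ex_series a -> sum_n a N <= Series a.
Proof.
  intros Ha Ea; apply (is_lim_seq_incr_compare (sum_n a)); [apply Series_correct, Ea|].
  intro n; rewrite sum_Sn; unfold plus; simpl; specialize (Ha (S n)); lra.
Qed.

Lemma Series_nonneg (a : nat -> R) : (forall n, 0 <= a n) -> ex_series a -> 0 <= Series a.
Proof.
  intros Ha Ea; apply Rle_trans with (sum_n a 0); [rewrite sum_O; apply Ha|].
  apply sum_n_le_Series; assumption.
Qed.

Lemma ex_series_of_bounded_sums (a : nat -> R) B :
  (forall n, 0 <= a n) -> (forall N, sum_n a N <= B) -> ex_series a /\ Series a <= B.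
Proof.
  intros Ha HB.
  destruct (ex_finite_lim_seq_incr (sum_n a) B) as [l Hl]; [|exact HB|].
  { intro n; rewrite sum_Sn; unfold plus; simpl; specialize (Ha (S n)); lra. }
  split; [exists l; exact Hl|].
  rewrite (is_series_unique a l Hl); change (Rbar_le l B).
  apply (is_lim_seq_le (sum_n a) (fun _ => B)); [exact HB|exact Hl|apply is_lim_seq_const].
Qed.

Lemma is_series_sum_n (u : nat -> nat -> R) N :
  (forall i, ex_series (u i)) ->
  is_series (fun j => sum_n (fun i => u i j) N) (sum_n (fun i => Series (u i)) N).
Proof.
  intro Hu; induction N as [|N IH].
  - rewrite sum_O; apply (is_series_ext (u 0%nat)); [intro; rewrite sum_O; reflexivity|].
    apply Series_correct, Hu.
  - rewrite sum_Sn.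
    apply (is_series_ext (fun j => plus (sum_n (fun i => u i j) N) (u (S N) j)));
      [intro; rewrite sum_Sn; reflexivity|].
    apply (is_series_plus (K := R_AbsRing) (V := R_NormedModule));
      [exact IH|apply Series_correct, Hu].
Qed.

Definition rect_sum (P : nat -> nat -> R) (N M : nat) : R :=
  sum_n (fun i => sum_n (fun j => P (S i) (S j)) M) N.

Definition double_sum_le (P : nat -> nat -> R) (B : R) : Prop :=
  forall N M, rect_sum P N M <= B.

Definition antidiag_sum (P : nat -> nat -> R) (n : nat) : R :=
  sum_n_m (fun j => P (n - j)%nat j) 1 (n - 1).

Lemma antidiag_sum_as_sum_n (P : nat -> nat -> R) m N : (m <= N)%nat ->
  antidiag_sum P (S m) = sum_n (fun j => if (j <? m)%nat then P (m - j)%nat (S j) else 0) N.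
Proof.
  intro HmN; rewrite (sum_n_trailing_zeros _ m N HmN).
  2: { intros n Hn; destruct (Nat.ltb_spec n m); [lia|reflexivity]. }
  unfold antidiag_sum; destruct m as [|m].
  - rewrite sum_n_m_zero, sum_O by lia; reflexivity.
  - rewrite sum_Sn, Nat.ltb_irrefl; unfold plus; simpl; rewrite Rplus_0_r.
    rewrite <- sum_n_m_S; apply sum_n_m_ext_loc; intros j Hj.
    replace (j <? S m)%nat with true by (symmetry; apply Nat.ltb_lt; lia); reflexivity.
Qed.

Lemma sum_n_shift_le (g : nat -> R) j N : (forall i, 0 <= g (S i)) ->
  sum_n (fun m => if (j <? m)%nat then g (m - j)%nat else 0) N <= sum_n (fun i => g (S i)) N.
Proof.
  intro Hg; revert j; induction N as [|N IH]; intro j.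
  - rewrite !sum_O; destruct (Nat.ltb_spec j 0); [lia|apply Hg].
  - rewrite sum_n_unfold_first; change (j <? 0)%nat with false; rewrite Rplus_0_l.
    apply Rle_trans with (sum_n (fun i => g (S i)) N);
      [|apply sum_n_le_mono; [intro; apply Hg|lia]].
    destruct j as [|j]; [right; apply sum_n_ext; reflexivity|apply (IH j)].
Qed.

Lemma sum_antidiag_le_rect_sum (P : nat -> nat -> R) N :
  (forall i j, (1 <= i)%nat -> (1 <= j)%nat -> 0 <= P i j) ->
  sum_n (fun m => antidiag_sum P (S m)) N <= rect_sum P N N.
Proof.
  intro HP.
  rewrite (sum_n_ext_loc _
    (fun m => sum_n (fun j => if (j <? m)%nat then P (m - j)%nat (S j) else 0) N))
    by (intros; apply antidiag_sum_as_sum_n; lia).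
  unfold rect_sum; rewrite (sum_n_switch (G := R_AbelianMonoid)).
  rewrite (sum_n_switch (fun i j => P (S i) (S j))).
  apply sum_n_le_compat; intro j.
  apply (sum_n_shift_le (fun i => P i (S j))); intro; apply HP; lia.
Qed.

Lemma double_sum_le_prod (c : R) (x y : nat -> R) (X Y : R) :
  0 <= c -> (forall i, 0 <= x (S i)) -> (forall j, 0 <= y (S j)) ->
  (forall N, sum_n (fun i => x (S i)) N <= X) -> (forall M, sum_n (fun j => y (S j)) M <= Y) ->
  double_sum_le (fun i j => c * x i * y j) (c * X * Y).
Proof.
  intros Hc Hx Hy HX HY N M; unfold rect_sum.
  rewrite (sum_n_ext _ (fun i => c * x (S i) * sum_n (fun j => y (S j)) M))
    by (intro i; rewrite <- (sum_n_mult_l (K := R_Ring)); reflexivity).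
  rewrite (sum_n_mult_r (K := R_Ring)), (sum_n_mult_l (K := R_Ring)).
  change (c * sum_n (fun i => x (S i)) N * sum_n (fun j => y (S j)) M <= c * X * Y).
  pose proof (sum_n_nonneg _ N Hx); pose proof (sum_n_nonneg _ M Hy).
  rewrite !Rmult_assoc; apply Rmult_le_compat_l; [exact Hc|].
  apply Rmult_le_compat; auto.
Qed.

Lemma double_sum_le_plus (P Q : nat -> nat -> R) (B C : R) :
  double_sum_le P B -> double_sum_le Q C -> double_sum_le (fun i j => P i j + Q i j) (B + C).
Proof.
  intros HP HQ N M; unfold rect_sum.
  rewrite (sum_n_ext _ (fun i => plus (sum_n (fun j => P (S i) (S j)) M)
                                      (sum_n (fun j => Q (S i) (S j)) M)))
    by (intro i; rewrite <- (sum_n_plus (G := R_AbelianMonoid)); reflexivity).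
  rewrite (sum_n_plus (G := R_AbelianMonoid)).
  apply Rplus_le_compat; [apply HP|apply HQ].
Qed.

Lemma double_sum_le_trans (P Q : nat -> nat -> R) (B : R) :
  (forall i j, (1 <= i)%nat -> (1 <= j)%nat -> P i j <= Q i j) ->
  double_sum_le Q B -> double_sum_le P B.
Proof.
  intros HPQ HQ N M; eapply Rle_trans; [|apply HQ].
  apply sum_n_le_compat; intro i; apply sum_n_le_compat; intro j; apply HPQ; lia.
Qed.

Section DoubleSeries.

Variables (P : nat -> nat -> R) (B : R).
Hypothesis P_ge0 : forall i j, (1 <= i)%nat -> (1 <= j)%nat -> 0 <= P i j.
Hypothesis P_le : double_sum_le P B.

Lemma double_sum_le_row_ex_series i : ex_series (fun j => P (S i) (S j)).
Proof.
  apply (ex_series_of_bounded_sums _ B); [intro; apply P_ge0; lia|].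
  intro M; eapply Rle_trans; [|apply (P_le i M)].
  apply (term_le_sum_n (fun i => sum_n (fun j => P (S i) (S j)) M)).
  intro; apply sum_n_nonneg; intro; apply P_ge0; lia.
Qed.

Lemma double_sum_le_sum_row_Series N :
  sum_n (fun i => Series (fun j => P (S i) (S j))) N <= B.
Proof.
  rewrite <- (is_series_unique _ _
    (is_series_sum_n (fun i j => P (S i) (S j)) N double_sum_le_row_ex_series)).
  apply (ex_series_of_bounded_sums _ B).
  - intro; apply sum_n_nonneg; intro; apply P_ge0; lia.
  - intro M; rewrite <- (sum_n_switch (G := R_AbelianMonoid)); apply P_le.
Qed.

End DoubleSeries.

Definition coag (A : nat -> nat -> R) (n : nat) : R :=
  / 2 * antidiag_sum A n - Series (fun m => A n (S m)).

Lemma antidiag_sum_abs_le (A : nat -> nat -> R) n :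
  Rabs (antidiag_sum A n) <= antidiag_sum (fun i j => Rabs (A i j)) n.
Proof. apply (norm_sum_n_m (K := R_AbsRing) (V := R_NormedModule)). Qed.

Lemma antidiag_sum_sub (A B : nat -> nat -> R) n :
  antidiag_sum (fun i j => A i j - B i j) n = antidiag_sum A n - antidiag_sum B n.
Proof.
  unfold antidiag_sum.
  rewrite (sum_n_m_ext (fun j => A (n - j)%nat j)
             (fun j => plus (A (n - j)%nat j - B (n - j)%nat j) (B (n - j)%nat j)))
    by (intro; unfold plus; simpl; ring).
  rewrite sum_n_m_plus; unfold plus; simpl; lra.
Qed.

Lemma coag_sub (A B : nat -> nat -> R) n :
  ex_series (fun m => A n (S m)) -> ex_series (fun m => B n (S m)) ->
  coag A n - coag B n = coag (fun i j => A i j - B i j) n.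
Proof.
  intros EA EB; unfold coag; rewrite antidiag_sum_sub.
  rewrite (Series_minus (fun m => A n (S m)) (fun m => B n (S m))) by assumption; ring.
Qed.

Section CoagBound.

Variable w : nat -> R.
Hypothesis w_pos : forall n, (1 <= n)%nat -> 0 < w n.
Hypothesis w_mono : forall n m, (1 <= n)%nat -> (n <= m)%nat -> w n <= w m.

Variables (A : nat -> nat -> R) (B : R).
Let P i j := w (i + j)%nat * Rabs (A i j).
Hypothesis P_le : double_sum_le P B.

Let P_ge0 i j : (1 <= i)%nat -> (1 <= j)%nat -> 0 <= P i j.
Proof. intros; apply Rmult_le_pos; [apply Rlt_le, w_pos; lia|apply Rabs_pos]. Qed.

Let row_abs_ex_series i : ex_series (fun j => Rabs (A (S i) (S j))).
Proof.
  apply (ex_series_le (K := R_AbsRing) (V := R_CompleteNormedModule) _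
           (fun j => / w (S i) * P (S i) (S j))).
  - intro j; change (Rabs (Rabs (A (S i) (S j))) <= / w (S i) * P (S i) (S j)).
    rewrite Rabs_Rabsolu; unfold P.
    assert (Hw : 0 < w (S i)) by (apply w_pos; lia).
    assert (Hwm : w (S i) <= w (S i + S j)%nat) by (apply w_mono; lia).
    rewrite <- Rmult_assoc; apply Rle_trans with (/ w (S i) * w (S i) * Rabs (A (S i) (S j))).
    + rewrite Rinv_l by lra; lra.
    + apply Rmult_le_compat_r; [apply Rabs_pos|].
      apply Rmult_le_compat_l; [apply Rlt_le, Rinv_0_lt_compat, Hw|exact Hwm].
  - apply (ex_series_scal_l (K := R_AbsRing) (V := R_NormedModule)).
    apply (double_sum_le_row_ex_series P B P_ge0 P_le).
Qed.

Lemma coag_row_ex_series n : (1 <= n)%nat -> ex_series (fun m => A n (S m)).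
Proof. intro Hn; destruct n as [|i]; [lia|]; apply ex_series_Rabs, row_abs_ex_series. Qed.

Let coag_term_le m :
  w (S m) * Rabs (coag A (S m)) <= / 2 * antidiag_sum P (S m) + Series (fun j => P (S m) (S j)).
Proof.
  assert (Hw : 0 < w (S m)) by (apply w_pos; lia).
  assert (Hanti : w (S m) * antidiag_sum (fun i j => Rabs (A i j)) (S m) = antidiag_sum P (S m)).
  { unfold antidiag_sum; rewrite <- (sum_n_m_mult_l (K := R_Ring)).
    apply sum_n_m_ext_loc; intros j Hj; unfold P.
    replace (S m - j + j)%nat with (S m) by lia; reflexivity. }
  assert (Hrow : w (S m) * Series (fun j => Rabs (A (S m) (S j)))
                 <= Series (fun j => P (S m) (S j))).
  { rewrite <- Series_scal_l; apply Series_le.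
    - intro j; split; [apply Rmult_le_pos; [lra|apply Rabs_pos]|].
      apply Rmult_le_compat_r; [apply Rabs_pos|apply w_mono; lia].
    - apply (double_sum_le_row_ex_series P B P_ge0 P_le). }
  pose proof (Rmult_le_compat_l _ _ _ (Rlt_le _ _ Hw) (antidiag_sum_abs_le A (S m))) as Hgain.
  pose proof (Rmult_le_compat_l _ _ _ (Rlt_le _ _ Hw) (Series_Rabs _ (row_abs_ex_series m)))
    as Hloss.
  unfold coag; rewrite <- Hanti.
  apply Rle_trans with
    (w (S m) * (/ 2 * Rabs (antidiag_sum A (S m)) + Rabs (Series (fun j => A (S m) (S j))))).
  - apply Rmult_le_compat_l; [lra|].
    unfold Rminus; eapply Rle_trans; [apply Rabs_triang|].
    rewrite Rabs_Ropp, Rabs_mult, (Rabs_right (/ 2)) by lra; lra.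
  - lra.
Qed.

Lemma coag_l1_bound : in_l1 w (coag A) /\ l1norm w (coag A) <= 3 / 2 * B.
Proof.
  apply ex_series_of_bounded_sums.
  - intro m; apply Rmult_le_pos; [apply Rlt_le, w_pos; lia|apply Rabs_pos].
  - intro N; eapply Rle_trans; [apply sum_n_le_compat; intro m; apply coag_term_le|].
    rewrite (sum_n_plus (G := R_AbelianMonoid)), (sum_n_mult_l (K := R_Ring)).
    pose proof (sum_antidiag_le_rect_sum P N P_ge0); pose proof (P_le N N).
    pose proof (double_sum_le_sum_row_Series P B P_ge0 P_le N).
    change (/ 2 * sum_n (fun m => antidiag_sum P (S m)) N
            + sum_n (fun m => Series (fun j => P (S m) (S j))) N <= 3 / 2 * B).
    lra.
Qed.

End CoagBound.

Definition tail_seq (N : nat) (x : nat -> R) (i : nat) : R :=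
  if (i <=? S N)%nat then 0 else x i.

Lemma sum_n_tail_seq (x : nat -> R) N M :
  sum_n (fun j => tail_seq N x (S j)) M
  = sum_n (fun j => x (S j)) M - sum_n (fun j => x (S j)) (Nat.min N M).
Proof.
  induction M as [|M IH].
  - rewrite Nat.min_0_r, !sum_O; unfold tail_seq; simpl; ring.
  - rewrite !sum_Sn, IH; unfold tail_seq.
    change (S (S M) <=? S N)%nat with (S M <=? N)%nat.
    destruct (Nat.leb_spec (S M) N).
    + rewrite (Nat.min_r N (S M)), (Nat.min_r N M), sum_Sn by lia; unfold plus; simpl; ring.
    + rewrite (Nat.min_l N (S M)), (Nat.min_l N M) by lia; unfold plus; simpl; ring.
Qed.

Lemma tail_seq_small (x : nat -> R) :
  (forall i, 0 <= x (S i)) -> ex_series (fun i => x (S i)) ->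
  forall tau, 0 < tau -> exists N0, forall N M, (N0 <= N)%nat ->
    sum_n (fun j => tail_seq N x (S j)) M <= tau.
Proof.
  intros Hx Ex tau Htau.
  destruct (proj2 (is_lim_seq_spec (sum_n (fun i => x (S i))) (Series (fun i => x (S i))))
             (Series_correct _ Ex)
             (mkposreal tau Htau)) as [N0 HN0].
  exists N0; intros N M HN; rewrite sum_n_tail_seq.
  specialize (HN0 N HN); simpl in HN0; apply Rabs_def2 in HN0.
  assert (Hmin : sum_n (fun j => x (S j)) M - sum_n (fun j => x (S j)) (Nat.min N M)
                 <= Series (fun j => x (S j)) - sum_n (fun j => x (S j)) N).
  { destruct (Nat.le_ge_cases N M).
    - rewrite Nat.min_l by assumption; pose proof (sum_n_le_Series _ M Hx Ex); lra.
    - rewrite Nat.min_r by assumption; pose proof (sum_n_le_Series _ N Hx Ex); lra. }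
  lra.
Qed.

Lemma filter_forall_le {X : Type} (F : (X -> Prop) -> Prop) {FF : Filter F}
  (Q : nat -> X -> Prop) N :
  (forall n, (n <= N)%nat -> F (Q n)) -> F (fun s => forall n, (n <= N)%nat -> Q n s).
Proof.
  intro HQ; induction N as [|N IH].
  - apply (filter_imp (Q 0%nat)); [|apply HQ; lia].
    intros s H n Hn; replace n with 0%nat by lia; exact H.
  - apply (filter_imp (fun s => (forall n, (n <= N)%nat -> Q n s) /\ Q (S N) s)).
    + intros s [H1 H2] n Hn; destruct (Nat.eq_dec n (S N)) as [->|]; [exact H2|apply H1; lia].
    + apply filter_and; [apply IH; intros; apply HQ; lia|apply HQ; lia].
Qed.

Lemma tail_seq_bounds (N : nat) (x : nat -> R) i :
  (1 <= i)%nat -> (forall i, 0 <= x (S i)) ->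
  0 <= tail_seq N x i <= x i /\ ((S N < i)%nat -> tail_seq N x i = x i).
Proof.
  intros Hi Hx; destruct i as [|i]; [lia|]; unfold tail_seq.
  pose proof (Hx i); destruct (Nat.leb_spec (S i) (S N)); split; intros; lra || lia || reflexivity.
Qed.

Section DominatedConvergence.

Variables (X : Type) (F : (X -> Prop) -> Prop).
Context {FF : Filter F}.
Variables (Q : X -> nat -> nat -> R) (x y : nat -> R).
Hypothesis x_ge0 : forall i, 0 <= x (S i).
Hypothesis y_ge0 : forall j, 0 <= y (S j).
Hypothesis Q_dominated :
  F (fun s => forall i j, (1 <= i)%nat -> (1 <= j)%nat -> 0 <= Q s i j <= x i * y j).
Hypothesis Q_pointwise :
  forall i j eta, (1 <= i)%nat -> (1 <= j)%nat -> 0 < eta -> F (fun s => Q s i j < eta).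

Lemma eventually_le_on_square eta N : 0 < eta ->
  F (fun s => forall i, (i <= S N)%nat -> forall j, (j <= S N)%nat ->
                 (1 <= i)%nat -> (1 <= j)%nat -> Q s i j <= eta * x i * y j).
Proof.
  intro Heta.
  apply (filter_forall_le F (fun i s => forall j, (j <= S N)%nat ->
           (1 <= i)%nat -> (1 <= j)%nat -> Q s i j <= eta * x i * y j)); intros i _.
  apply (filter_forall_le F (fun j s =>
           (1 <= i)%nat -> (1 <= j)%nat -> Q s i j <= eta * x i * y j)); intros j _.
  destruct (Nat.le_gt_cases 1 i) as [Hi|Hi]; [|apply filter_forall; intros; lia].
  destruct (Nat.le_gt_cases 1 j) as [Hj|Hj]; [|apply filter_forall; intros; lia].
  assert (Hxy : 0 <= x i * y j).
  { destruct i as [|i], j as [|j]; try lia; apply Rmult_le_pos; auto. }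
  destruct (Rle_lt_or_eq_dec 0 (x i * y j) Hxy) as [Hpos|Hzero].
  - apply (filter_imp (fun s => Q s i j < eta * (x i * y j))); [intros s Hs _ _; lra|].
    apply Q_pointwise; auto; apply Rmult_lt_0_compat; assumption.
  - generalize Q_dominated; apply filter_imp; intros s Hs _ _.
    destruct (Hs i j Hi Hj) as [_ HQ]; rewrite Rmult_assoc, <- Hzero, Rmult_0_r; lra.
Qed.

Let Q_le_square_or_tails s eta N i j : (1 <= i)%nat -> (1 <= j)%nat -> 0 < eta ->
  (forall i, (i <= S N)%nat -> forall j, (j <= S N)%nat ->
     (1 <= i)%nat -> (1 <= j)%nat -> Q s i j <= eta * x i * y j) ->
  (forall i j, (1 <= i)%nat -> (1 <= j)%nat -> 0 <= Q s i j <= x i * y j) ->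
  Q s i j <= eta * x i * y j + (1 * x i * tail_seq N y j + 1 * tail_seq N x i * y j).
Proof.
  intros Hi Hj Heta Hsquare Hdom.
  destruct (tail_seq_bounds N x i Hi x_ge0) as [[Hxt0 _] Hxt].
  destruct (tail_seq_bounds N y j Hj y_ge0) as [[Hyt0 _] Hyt].
  assert (Hxi : 0 <= x i) by (destruct i as [|i]; [lia|apply x_ge0]).
  assert (Hyj : 0 <= y j) by (destruct j as [|j]; [lia|apply y_ge0]).
  assert (0 <= x i * tail_seq N y j) by (apply Rmult_le_pos; assumption).
  assert (0 <= tail_seq N x i * y j) by (apply Rmult_le_pos; assumption).
  assert (0 <= eta * x i * y j) by (apply Rmult_le_pos; [apply Rmult_le_pos|]; lra).
  destruct (Hdom i j Hi Hj) as [_ HQ].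
  destruct (Nat.le_gt_cases i (S N)) as [HiN|HiN];
    [destruct (Nat.le_gt_cases j (S N)) as [HjN|HjN]|].
  - specialize (Hsquare i HiN j HjN Hi Hj); lra.
  - rewrite Hyt by assumption; lra.
  - rewrite Hxt by assumption; lra.
Qed.

Lemma double_sum_le_eventually :
  ex_series (fun i => x (S i)) -> ex_series (fun j => y (S j)) ->
  forall eps, 0 < eps -> F (fun s => double_sum_le (Q s) eps).
Proof.
  intros Ex Ey eps Heps.
  set (SX := Series (fun i => x (S i))); set (SY := Series (fun j => y (S j))).
  assert (HSX : 0 <= SX) by (apply Series_nonneg; assumption).
  assert (HSY : 0 <= SY) by (apply Series_nonneg; assumption).
  set (tau := eps / (3 * (SX + SY + 1))); set (eta := eps / (3 * (SX * SY + 1))).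
  assert (Htau : 0 < tau) by (apply Rdiv_lt_0_compat; lra).
  assert (Heta : 0 < eta) by (apply Rdiv_lt_0_compat; nra).
  destruct (tail_seq_small x x_ge0 Ex tau Htau) as [Nx HNx].
  destruct (tail_seq_small y y_ge0 Ey tau Htau) as [Ny HNy].
  set (N := Nat.max Nx Ny).
  generalize (filter_and _ _ (eventually_le_on_square eta N Heta) Q_dominated).
  apply filter_imp; intros s [Hsquare Hdom] N' M'.
  apply Rle_trans with (eta * SX * SY + (1 * SX * tau + 1 * tau * SY)).
  - revert N' M'; apply (double_sum_le_trans _
      (fun i j => eta * x i * y j + (1 * x i * tail_seq N y j + 1 * tail_seq N x i * y j))).
    + intros i j Hi Hj; apply Q_le_square_or_tails; auto.
    + apply double_sum_le_plus; [|apply double_sum_le_plus];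
        apply double_sum_le_prod; try lra; try assumption;
        try (intro; apply sum_n_le_Series; assumption);
        try (intro; apply tail_seq_bounds; auto; lia).
      * intro M; apply HNy; lia.
      * intro M; apply HNx; lia.
  - assert (eta * (SX * SY) <= eps / 3).
    { apply Rle_trans with (eta * (SX * SY + 1)); [apply Rmult_le_compat_l; lra|].
      right; unfold eta; field; nra. }
    assert (tau * (SX + SY) <= eps / 3).
    { apply Rle_trans with (tau * (SX + SY + 1)); [apply Rmult_le_compat_l; lra|].
      right; unfold tau; field; lra. }
    nra.
Qed.

End DominatedConvergence.

Section WeightedL1.

Variable v : nat -> R.
Hypothesis v_ge0 : forall n, (1 <= n)%nat -> 0 <= v n.

Let vabs_ge0 f m : 0 <= v (S m) * Rabs (f (S m)).
Proof. apply Rmult_le_pos; [apply v_ge0; lia|apply Rabs_pos]. Qed.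

Lemma l1norm_nonneg f : in_l1 v f -> 0 <= l1norm v f.
Proof. intro Hf; apply Series_nonneg; [apply vabs_ge0|exact Hf]. Qed.

Lemma in_l1_sub f g : in_l1 v f -> in_l1 v g -> in_l1 v (seq_sub f g).
Proof.
  intros Hf Hg.
  apply (ex_series_le (K := R_AbsRing) (V := R_CompleteNormedModule) _
           (fun m => v (S m) * Rabs (f (S m)) + v (S m) * Rabs (g (S m)))).
  - intro m; change (Rabs (v (S m) * Rabs (seq_sub f g (S m)))
                     <= v (S m) * Rabs (f (S m)) + v (S m) * Rabs (g (S m))).
    rewrite Rabs_right by (apply Rle_ge, vabs_ge0); unfold seq_sub.
    rewrite <- Rmult_plus_distr_l; apply Rmult_le_compat_l; [apply v_ge0; lia|].
    unfold Rminus; eapply Rle_trans; [apply Rabs_triang|]; rewrite Rabs_Ropp; lra.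
  - apply (ex_series_plus (K := R_AbsRing) (V := R_NormedModule)); assumption.
Qed.

Lemma l1norm_le_add f g :
  in_l1 v f -> in_l1 v g -> l1norm v g <= l1norm v f + l1norm v (seq_sub g f).
Proof.
  intros Hf Hg; unfold l1norm.
  rewrite <- Series_plus by (try apply in_l1_sub; assumption).
  apply Series_le.
  - intro m; split; [apply vabs_ge0|]; unfold seq_sub.
    rewrite <- Rmult_plus_distr_l; apply Rmult_le_compat_l; [apply v_ge0; lia|].
    replace (g (S m)) with (f (S m) + (g (S m) - f (S m))) at 1 by ring; apply Rabs_triang.
  - apply (ex_series_plus (K := R_AbsRing) (V := R_NormedModule)); [|apply in_l1_sub]; assumption.
Qed.

End WeightedL1.

Lemma within_locally_intro (D P : R -> Prop) t delta : 0 < delta ->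
  (forall s, D s -> Rabs (s - t) < delta -> P s) -> within D (locally t) P.
Proof. intros Hd H; exists (mkposreal delta Hd); intros s Hs HD; apply H; assumption. Qed.

Lemma within_locally_elim (D P : R -> Prop) t : within D (locally t) P ->
  exists delta, 0 < delta /\ forall s, D s -> Rabs (s - t) < delta -> P s.
Proof. intros [d H]; exists d; split; [apply cond_pos|]; intros s HD Hs; apply H; assumption. Qed.

Definition coag_kernel (k : nat -> nat -> R -> R) (t : R) (f : nat -> R) (i j : nat) : R :=
  k i j t * f i * f j.

Lemma Kop_coag k t f : Kop k t f = coag (coag_kernel k t f).
Proof. reflexivity. Qed.

Definition weighted_gap (w : nat -> R) (k : nat -> nat -> R -> R) (s t : R) (f g : nat -> R)
  (i j : nat) : R :=
  w (i + j)%nat * Rabs (coag_kernel k s f i j - coag_kernel k t g i j).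

Lemma Rbar_lt_exists_between (t : R) (T : Rbar) :
  Rbar_lt t T -> exists t2, t < t2 /\ Rbar_lt t2 T.
Proof.
  destruct T as [T| |]; simpl; intro HtT; [exists ((t + T) / 2)|exists (t + 1)|contradiction];
    simpl; split; lra || exact I.
Qed.

Lemma in_time_of_le (T : Rbar) (s t2 : R) : 0 <= s <= t2 -> Rbar_lt t2 T -> in_time T s.
Proof. intros Hs Ht2; split; [lra|]; destruct T; simpl in *; lra || exact I || contradiction. Qed.

Section CoagulationOperator.

Variables (T : Rbar) (w wt : nat -> R) (k : nat -> nat -> R -> R).
Hypothesis w_pos : forall n, (1 <= n)%nat -> 0 < w n.
Hypothesis w_mono : forall n m, (1 <= n)%nat -> (n <= m)%nat -> w n <= w m.
Hypothesis wt_ge0 : forall n, (1 <= n)%nat -> 0 <= wt n.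
Hypothesis k_ge0 : forall n j t, (1 <= n)%nat -> (1 <= j)%nat -> in_time T t -> 0 <= k n j t.
Hypothesis k_cont : forall n j, (1 <= n)%nat -> (1 <= j)%nat ->
  forall t, in_time T t -> forall eps, 0 < eps -> exists delta, 0 < delta /\
    forall s, in_time T s -> Rabs (s - t) < delta -> Rabs (k n j s - k n j t) < eps.
Hypothesis k_bound : forall t', 0 < t' -> Rbar_lt t' T -> exists c, 0 < c /\
  forall n j t, (1 <= n)%nat -> (1 <= j)%nat -> 0 <= t <= t' ->
    w (n + j)%nat * k n j t <= c * wt n * wt j.

Let wabs (f : nat -> R) (i : nat) : R := wt i * Rabs (f i).

Let wabs_ge0 f i : (1 <= i)%nat -> 0 <= wabs f i.
Proof. intro; apply Rmult_le_pos; [apply wt_ge0|apply Rabs_pos]; assumption. Qed.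

Let wabs_sum_le f : in_l1 wt f -> forall N, sum_n (fun i => wabs f (S i)) N <= l1norm wt f.
Proof. intros Hf N; apply sum_n_le_Series; [intro; apply wabs_ge0; lia|exact Hf]. Qed.

Lemma k_bound_after t : in_time T t -> exists t2 c, t < t2 /\ Rbar_lt t2 T /\ 0 < c /\
  forall n j s, (1 <= n)%nat -> (1 <= j)%nat -> 0 <= s <= t2 ->
    in_time T s /\ 0 <= k n j s /\ w (n + j)%nat * k n j s <= c * wt n * wt j.
Proof.
  (* The growth bound is only assumed on [0, t'] with t' > 0; a horizon t2 > t also covers
     every s close to t. *)
  intros [Ht0 HtT]; destruct (Rbar_lt_exists_between t T HtT) as [t2 [Ht2 Ht2T]].
  destruct (k_bound t2) as [c [Hc Hkc]]; [lra|exact Ht2T|].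
  exists t2, c; split; [|split; [|split]]; try assumption.
  intros n j s Hn Hj Hs; pose proof (in_time_of_le T s t2 Hs Ht2T) as Hin.
  split; [exact Hin|split; [apply k_ge0|apply Hkc]; assumption].
Qed.

Section FixedHorizon.

Variables (t2 c : R).
Hypothesis c_pos : 0 < c.
Hypothesis k_le : forall n j s, (1 <= n)%nat -> (1 <= j)%nat -> 0 <= s <= t2 ->
  in_time T s /\ 0 <= k n j s /\ w (n + j)%nat * k n j s <= c * wt n * wt j.

Let weighted_kernel_le n j s u : (1 <= n)%nat -> (1 <= j)%nat -> 0 <= s <= t2 ->
  w (n + j)%nat * Rabs (k n j s * u) <= c * wt n * wt j * Rabs u.
Proof.
  intros Hn Hj Hs; destruct (k_le n j s Hn Hj Hs) as [_ [Hk Hwk]].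
  rewrite Rabs_mult, (Rabs_right (k n j s)), <- Rmult_assoc by lra.
  apply Rmult_le_compat_r; [apply Rabs_pos|exact Hwk].
Qed.

Lemma coag_kernel_double_sum_le t f : 0 <= t <= t2 -> in_l1 wt f ->
  double_sum_le (fun i j => w (i + j)%nat * Rabs (coag_kernel k t f i j))
                (c * l1norm wt f * l1norm wt f).
Proof.
  intros Ht Hf; apply (double_sum_le_trans _ (fun i j => c * wabs f i * wabs f j)).
  - intros i j Hi Hj; unfold coag_kernel; rewrite Rmult_assoc.
    eapply Rle_trans; [apply weighted_kernel_le; assumption|].
    right; unfold wabs; rewrite Rabs_mult; ring.
  - apply double_sum_le_prod;
      try (intro; apply wabs_ge0; lia); try apply wabs_sum_le; lra || assumption.
Qed.

Lemma weighted_gap_double_sum_le t f g : 0 <= t <= t2 -> in_l1 wt f -> in_l1 wt g ->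
  double_sum_le (weighted_gap w k t t f g)
    (c * l1norm wt f * l1norm wt (seq_sub f g) + c * l1norm wt (seq_sub f g) * l1norm wt g).
Proof.
  intros Ht Hf Hg; pose proof (in_l1_sub wt wt_ge0 f g Hf Hg) as Hfg.
  apply (double_sum_le_trans _ (fun i j => c * wabs f i * wabs (seq_sub f g) j
                                        + c * wabs (seq_sub f g) i * wabs g j)).
  - intros i j Hi Hj; unfold weighted_gap, coag_kernel.
    replace (k i j t * f i * f j - k i j t * g i * g j)
      with (k i j t * (f i * (f j - g j) + (f i - g i) * g j)) by ring.
    eapply Rle_trans; [apply weighted_kernel_le; assumption|].
    assert (Hc : 0 <= c * wt i * wt j)
      by (apply Rmult_le_pos; [apply Rmult_le_pos|]; try apply wt_ge0; lra || assumption).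
    eapply Rle_trans; [apply Rmult_le_compat_l; [exact Hc|apply Rabs_triang]|].
    right; unfold wabs, seq_sub; rewrite !Rabs_mult; ring.
  - apply double_sum_le_plus; apply double_sum_le_prod;
      try (intro; apply wabs_ge0; lia); try apply wabs_sum_le; lra || assumption.
Qed.

Lemma weighted_gap_split_double_sum_le s t f g B : 0 <= s <= t2 -> in_l1 wt f -> in_l1 wt g ->
  double_sum_le (weighted_gap w k s t f f) B ->
  double_sum_le (weighted_gap w k s t g f)
    (c * l1norm wt g * l1norm wt (seq_sub g f) + c * l1norm wt (seq_sub g f) * l1norm wt f + B).
Proof.
  intros Hs Hf Hg HB.
  apply (double_sum_le_trans _ (fun i j =>
    weighted_gap w k s s g f i j + weighted_gap w k s t f f i j)).
  - intros i j Hi Hj; unfold weighted_gap; rewrite <- Rmult_plus_distr_l.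
    apply Rmult_le_compat_l; [apply Rlt_le, w_pos; lia|].
    replace (coag_kernel k s g i j - coag_kernel k t f i j) with
      ((coag_kernel k s g i j - coag_kernel k s f i j)
       + (coag_kernel k s f i j - coag_kernel k t f i j)) by ring.
    apply Rabs_triang.
  - apply double_sum_le_plus; [apply weighted_gap_double_sum_le|exact HB]; assumption.
Qed.

Let weighted_gap_same_f s t f i j :
  weighted_gap w k s t f f i j = w (i + j)%nat * Rabs (k i j s - k i j t) * Rabs (f i * f j).
Proof.
  unfold weighted_gap, coag_kernel; rewrite !Rmult_assoc, <- Rmult_minus_distr_r, Rabs_mult.
  ring.
Qed.

Let weighted_gap_dominated t f : in_time T t -> t < t2 ->
  within (in_time T) (locally t) (fun s => forall i j, (1 <= i)%nat -> (1 <= j)%nat ->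
    0 <= weighted_gap w k s t f f i j <= 2 * c * wabs f i * wabs f j).
Proof.
  intros Ht Htt2; apply (within_locally_intro _ _ t (t2 - t)); [lra|].
  intros s Hs Hst i j Hi Hj; rewrite weighted_gap_same_f.
  assert (Hs2 : 0 <= s <= t2) by (destruct Hs; apply Rabs_def2 in Hst; lra).
  assert (Ht2 : 0 <= t <= t2) by (destruct Ht; lra).
  destruct (k_le i j s Hi Hj Hs2) as [_ [Hks Hwks]].
  destruct (k_le i j t Hi Hj Ht2) as [_ [Hkt Hwkt]].
  assert (Hw : 0 < w (i + j)%nat) by (apply w_pos; lia).
  assert (Hgap : w (i + j)%nat * Rabs (k i j s - k i j t) <= 2 * c * wt i * wt j).
  { apply Rle_trans with (w (i + j)%nat * (k i j s + k i j t));
      [apply Rmult_le_compat_l; [lra|apply Rabs_le; lra]|lra]. }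
  pose proof (Rabs_pos (k i j s - k i j t)); pose proof (Rabs_pos (f i * f j)).
  split; [apply Rmult_le_pos; [apply Rmult_le_pos|]; lra|].
  apply Rle_trans with (2 * c * wt i * wt j * Rabs (f i * f j)); [apply Rmult_le_compat_r; lra|].
  right; unfold wabs; rewrite Rabs_mult; ring.
Qed.

Let weighted_gap_pointwise t f : in_time T t ->
  forall i j eta, (1 <= i)%nat -> (1 <= j)%nat -> 0 < eta ->
    within (in_time T) (locally t) (fun s => weighted_gap w k s t f f i j < eta).
Proof.
  intros Ht i j eta Hi Hj Heta.
  set (C := w (i + j)%nat * Rabs (f i * f j) + 1).
  assert (HC : 0 < C)
    by (pose proof (w_pos (i + j)%nat ltac:(lia)); pose proof (Rabs_pos (f i * f j));
        unfold C; nra).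
  destruct (k_cont i j Hi Hj t Ht (eta / C)) as [d [Hd Hkd]]; [apply Rdiv_lt_0_compat; lra|].
  apply (within_locally_intro _ _ t d Hd); intros s Hs Hst; rewrite weighted_gap_same_f.
  specialize (Hkd s Hs Hst); pose proof (w_pos (i + j)%nat ltac:(lia)).
  apply Rle_lt_trans with (C * Rabs (k i j s - k i j t)).
  - unfold C; pose proof (Rabs_pos (k i j s - k i j t)); nra.
  - apply (Rmult_lt_compat_l C) in Hkd; [|exact HC].
    replace (C * (eta / C)) with eta in Hkd by (field; lra); exact Hkd.
Qed.

Lemma weighted_gap_time_double_sum_le t f : in_time T t -> t < t2 -> in_l1 wt f ->
  forall eps, 0 < eps ->
    within (in_time T) (locally t) (fun s => double_sum_le (weighted_gap w k s t f f) eps).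
Proof.
  intros Ht Htt2 Hf.
  apply (double_sum_le_eventually _ _ _ (fun i => 2 * c * wabs f i) (wabs f)).
  - intro i; apply Rmult_le_pos; [lra|apply wabs_ge0; lia].
  - intro; apply wabs_ge0; lia.
  - apply weighted_gap_dominated; assumption.
  - apply weighted_gap_pointwise; assumption.
  - apply (ex_series_scal_l (K := R_AbsRing) (V := R_NormedModule) (2 * c)); exact Hf.
  - exact Hf.
Qed.

End FixedHorizon.

Lemma Kop_well_defined t f : in_time T t -> in_l1 wt f ->
  (forall n, (1 <= n)%nat -> ex_series (fun m => k n (S m) t * f n * f (S m)))
  /\ in_l1 w (Kop k t f).
Proof.
  intros Ht Hf; destruct (k_bound_after t Ht) as [t2 [c [Ht2 [_ [Hc Hk]]]]].
  assert (HB := coag_kernel_double_sum_le t2 c Hc Hk t f ltac:(destruct Ht; lra) Hf).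
  split; [apply (coag_row_ex_series w w_pos w_mono _ _ HB)
         |apply (coag_l1_bound w w_pos w_mono _ _ HB)].
Qed.

Lemma l1norm_Kop_sub_le s t f g B : in_time T s -> in_time T t -> in_l1 wt f -> in_l1 wt g ->
  double_sum_le (weighted_gap w k s t f g) B ->
  l1norm w (seq_sub (Kop k s f) (Kop k t g)) <= 3 / 2 * B.
Proof.
  intros Hs Ht Hf Hg HB.
  destruct (Kop_well_defined s f Hs Hf) as [Rf _]; destruct (Kop_well_defined t g Ht Hg) as [Rg _].
  unfold l1norm; rewrite (Series_ext _ (fun m => w (S m) * Rabs
    (coag (fun i j => coag_kernel k s f i j - coag_kernel k t g i j) (S m)))).
  - apply (coag_l1_bound w w_pos w_mono _ _ HB).
  - intro m; unfold seq_sub; rewrite !Kop_coag, coag_sub; [reflexivity|apply Rf; lia|apply Rg; lia].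
Qed.

Lemma Kop_locally_lipschitz t' : in_time T t' -> forall r, 0 < r -> exists L,
  forall f g t, in_l1 wt f -> in_l1 wt g ->
    l1norm wt f <= r -> l1norm wt g <= r -> 0 <= t <= t' ->
    l1norm w (seq_sub (Kop k t f) (Kop k t g)) <= L * l1norm wt (seq_sub f g).
Proof.
  intros Ht' r Hr; destruct (k_bound_after t' Ht') as [t2 [c [Ht2 [_ [Hc Hk]]]]].
  exists (3 * c * r); intros f g t Hf Hg Hfr Hgr Ht.
  assert (Ht2' : 0 <= t <= t2) by lra.
  destruct (Hk 1%nat 1%nat t ltac:(lia) ltac:(lia) Ht2') as [Hin _].
  eapply Rle_trans; [apply (l1norm_Kop_sub_le t t f g _ Hin Hin Hf Hg
                       (weighted_gap_double_sum_le t2 c Hc Hk t f g Ht2' Hf Hg))|].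
  pose proof (l1norm_nonneg wt wt_ge0 _ (in_l1_sub wt wt_ge0 f g Hf Hg)).
  set (Z := l1norm wt (seq_sub f g)) in *.
  assert (c * Z * (l1norm wt f + l1norm wt g) <= c * Z * (2 * r))
    by (apply Rmult_le_compat_l; [apply Rmult_le_pos|]; lra).
  lra.
Qed.

Lemma Kop_continuous t f : in_time T t -> in_l1 wt f ->
  forall eps, 0 < eps -> exists delta, 0 < delta /\
    forall s g, in_time T s -> in_l1 wt g ->
      Rabs (s - t) < delta -> l1norm wt (seq_sub g f) < delta ->
      l1norm w (seq_sub (Kop k s g) (Kop k t f)) < eps.
Proof.
  intros Ht Hf eps Heps.
  destruct (k_bound_after t Ht) as [t2 [c [Ht2 [_ [Hc Hk]]]]].
  set (X := l1norm wt f); assert (HX : 0 <= X) by apply (l1norm_nonneg wt wt_ge0 f Hf).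
  destruct (within_locally_elim _ _ t (weighted_gap_time_double_sum_le t2 c Hc Hk t f Ht Ht2 Hf
              (eps / 3) ltac:(lra))) as [d1 [Hd1 Htime]].
  set (d2 := eps / (3 * c * (2 * X + 1))).
  assert (Hd2 : 0 < d2) by (apply Rdiv_lt_0_compat; [|apply Rmult_lt_0_compat]; lra).
  exists (Rmin d1 (Rmin (t2 - t) (Rmin 1 d2))).
  split; [repeat apply Rmin_pos; lra|]; intros s g Hs Hg Hst Hgf.
  destruct (proj1 (Rmin_Rgt _ _ _) Hst) as [Hst1 [Hst2 _]%Rmin_Rgt].
  destruct (proj1 (Rmin_Rgt _ _ _) Hgf) as [_ [_ [Hgf1 Hgf2]%Rmin_Rgt]%Rmin_Rgt].
  assert (Hs2 : 0 <= s <= t2) by (destruct Hs; apply Rabs_def2 in Hst2; lra).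
  set (Z := l1norm wt (seq_sub g f)) in *.
  assert (HZ : 0 <= Z) by apply (l1norm_nonneg wt wt_ge0 _ (in_l1_sub wt wt_ge0 g f Hg Hf)).
  assert (HY : l1norm wt g <= X + Z) by apply (l1norm_le_add wt wt_ge0 f g Hf Hg).
  eapply Rle_lt_trans.
  { eapply (l1norm_Kop_sub_le s t g f _ Hs Ht Hg Hf).
    apply (weighted_gap_split_double_sum_le t2 c Hc Hk s t f g (eps / 3) Hs2 Hf Hg).
    apply Htime; [exact Hs|exact Hst1]. }
  fold X Z.
  assert (c * Z * (l1norm wt g + X) <= c * Z * (2 * X + 1))
    by (apply Rmult_le_compat_l; [apply Rmult_le_pos|]; lra).
  assert (c * Z * (2 * X + 1) < eps / 3).
  { replace (eps / 3) with (c * d2 * (2 * X + 1)) by (unfold d2; field; lra).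
    apply Rmult_lt_compat_r; [lra|apply Rmult_lt_compat_l; lra]. }
  lra.
Qed.

End CoagulationOperator.

Theorem proposition4p3
  (T : Rbar) (a : nat -> R) (b : nat -> nat -> R) (k : nat -> nat -> R -> R)
  (w : nat -> R) (kappa alpha : R)
  (HT : Rbar_lt 0 T)
  (Ha : forall n, (1 <= n)%nat -> 0 <= a n)
  (Hb : forall n j, (1 <= n)%nat -> (1 <= j)%nat -> 0 <= b n j)
  (Hb0 : forall n j, (1 <= n)%nat -> (1 <= j)%nat -> (j <= n)%nat -> b n j = 0)
  (Hksym : forall n j t, (1 <= n)%nat -> (1 <= j)%nat -> in_time T t ->
             k n j t = k j n t)
  (Hkpos : forall n j t, (1 <= n)%nat -> (1 <= j)%nat -> in_time T t ->
             0 <= k n j t)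
  (Hwn : forall n, (1 <= n)%nat -> INR n <= w n)
  (Hwmono : forall n m, (1 <= n)%nat -> (n <= m)%nat -> w n <= w m)
  (Hkappa : 0 < kappa <= 1)
  (Hwb : forall j, (2 <= j)%nat ->
           sum_n_m (fun n => w n * b n j) 1 (j - 1) <= kappa * w j)
  (Halpha : 0 <= alpha < 1)
  (Hcase : alpha = 0 \/ (kappa < 1 /\ 0 < alpha < 1))
  (Hkcont : forall n j, (1 <= n)%nat -> (1 <= j)%nat ->
     forall t, in_time T t -> forall eps, 0 < eps -> exists delta, 0 < delta /\
       forall s, in_time T s -> Rabs (s - t) < delta ->
         Rabs (k n j s - k n j t) < eps)
  (Hkbound : forall t', 0 < t' -> Rbar_lt t' T -> exists c, 0 < c /\
     forall n j t, (1 <= n)%nat -> (1 <= j)%nat -> 0 <= t <= t' ->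
       k n j t <= c * wtilde alpha a w n * wtilde alpha a w j / w (n + j)%nat) :
  let wt := wtilde alpha a w in
  (* K maps [0,T) x l^1_wt into l^1_w (the defining series converge) *)
  (forall t f, in_time T t -> in_l1 wt f ->
     (forall n, (1 <= n)%nat -> ex_series (fun m => k n (S m) t * f n * f (S m)))
     /\ in_l1 w (Kop k t f))
  /\
  (* continuity of K : [0,T) x l^1_wt -> l^1_w *)
  (forall t f, in_time T t -> in_l1 wt f ->
     forall eps, 0 < eps -> exists delta, 0 < delta /\
       forall s g, in_time T s -> in_l1 wt g ->
         Rabs (s - t) < delta -> l1norm wt (seq_sub g f) < delta ->
         l1norm w (seq_sub (Kop k s g) (Kop k t f)) < eps)
  /\
  (* local Lipschitz bound, uniform in t on [0,t'] *)
  (forall t', in_time T t' -> forall r, 0 < r -> exists L,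
     forall f g t, in_l1 wt f -> in_l1 wt g ->
       l1norm wt f <= r -> l1norm wt g <= r -> 0 <= t <= t' ->
       l1norm w (seq_sub (Kop k t f) (Kop k t g)) <= L * l1norm wt (seq_sub f g)).
Proof.
  intro wt.
  assert (w_pos : forall n, (1 <= n)%nat -> 0 < w n).
  { intros n Hn; apply Rlt_le_trans with (INR n); [apply lt_0_INR; lia|auto]. }
  assert (wt_ge0 : forall n, (1 <= n)%nat -> 0 <= wt n).
  { intros n Hn; apply Rmult_le_pos; [apply Rlt_le, exp_pos|apply Rlt_le, w_pos, Hn]. }
  assert (k_bound : forall t', 0 < t' -> Rbar_lt t' T -> exists c, 0 < c /\
    forall n j t, (1 <= n)%nat -> (1 <= j)%nat -> 0 <= t <= t' ->
      w (n + j)%nat * k n j t <= c * wt n * wt j).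
  { intros t' Ht' Ht'T; destruct (Hkbound t' Ht' Ht'T) as [c [Hc Hkc]].
    exists c; split; [exact Hc|]; intros n j t Hn Hj Ht.
    pose proof (w_pos (n + j)%nat ltac:(lia)) as Hw.
    specialize (Hkc n j t Hn Hj Ht); apply (Rmult_le_compat_l (w (n + j)%nat)) in Hkc; [|lra].
    replace (c * wt n * wt j) with
      (w (n + j)%nat * (c * wt n * wt j / w (n + j)%nat)) by (field; lra); exact Hkc. }
  split; [|split].
  - apply (Kop_well_defined T w wt k w_pos Hwmono wt_ge0 Hkpos k_bound).
  - apply (Kop_continuous T w wt k w_pos Hwmono wt_ge0 Hkpos Hkcont k_bound).
  - apply (Kop_locally_lipschitz T w wt k w_pos Hwmono wt_ge0 Hkpos k_bound).
Qed.
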